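(* Let $\Lambda_{({\bf A},{\bf B},{\bf c})}:\mathcal L(\mathcal H^{\otimes N'})\to\mathcal L(\mathcal H^{\otimes N})$ be a Gaussian channel. Then $\Lambda_{({\bf A},{\bf B},{\bf c})}$ is Gaussian incompatibility breaking if and only if ${\bf B}-i{\bf A}^T{\bf \Omega}{\bf A}\ge {\bf 0}$.
   Context: For $n\ge1$, $\mathcal H^{\otimes n}=L^2(\mathbb R^n)$ with canonical position and momentum operators $Q_j,P_j$, ${\bf R}=(Q_1,P_1,\ldots,Q_n,P_n)^T$, ${\bf \Omega}=\bigoplus_{j=1}^n\begin{pmatrix}0&1\\-1&0\end{pmatrix}$ (its size is determined by the phase space on which it acts), and Weyl operators $W({\bf x})=e^{-i{\bf x}^T{\bf \Omega R}}$, ${\bf x}\in\mathbb R^{2n}$. A Gaussian channel (Heisenberg picture) is a normal unital completely positive map $\Lambda:\mathcal L(\mathcal H^{\otimes N'})\to\mathcal L(\mathcal H^{\otimes N})$ with $\Lambda(W({\bf x}))=W({\bf Ax})e^{-\frac14{\bf x}^T{\bf Bx}-i{\bf c}^T{\bf x}}$ for ${\bf x}\in\mathbb R^{2N'}$, where ${\bf A}$ is a real $2N\times 2N'$ matrix, ${\bf B}$ a real $2N'\times 2N'$ matrix, ${\bf c}\in\mathbb R^{2N'}$, subject to ${\bf B}+i{\bf \Omega}-i{\bf A}^T{\bf \Omega A}\ge{\bf 0}$; it is denoted $\Lambda_{({\bf A},{\bf B},{\bf c})}$. An observable is a POVM $\mathsf{E}:\mathcal B(\mathbb R^M)\to\mathcal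 L(\mathcal H^{\otimes n})$; it is Gaussian if $\int e^{i{\bf p}^T{\bf x}}\,d\mathsf{E}({\bf x})=W({\bf Kp})e^{-\frac14{\bf p}^T{\bf Lp}-i{\bf m}^T{\bf p}}$ with ${\bf K}$ real $2n\times M$, ${\bf L}$ real $M\times M$ satisfying ${\bf L}-i{\bf K}^T{\bf \Omega K}\ge0$, ${\bf m}\in\mathbb R^M$ (every such triple determines a Gaussian observable). A channel transforms an observable $\mathsf{E}$ on $\mathcal H^{\otimes N'}$ into $\Lambda(\mathsf{E}):X\mapsto\Lambda(\mathsf{E}(X))$; for a Gaussian $\mathsf{E}$ with parameters $({\bf K},{\bf L},{\bf m})$, $\Lambda_{({\bf A},{\bf B},{\bf c})}(\mathsf{E})$ is Gaussian with parameters $({\bf AK},{\bf L}+{\bf K}^T{\bf BK},{\bf m}+{\bf K}^T{\bf c})$. A Gaussian postprocessing is a Markov kernel $f:\mathcal B(\mathbb R^{M'})\times\mathbb R^M\to[0,1]$ such that $\int e^{i{\bf p}^T{\bf y}}f(d{\bf y},{\bf x})=e^{i({\bf A}'{\bf p})^T{\bf x}}e^{-\frac14{\bf p}^T{\bf B}'{\bf p}-i{\bf c}'^T{\bf p}}$ for some real $M\times M'$ matrix ${\bf A}'$, real positive semidefinite ${\bf B}'$ and vector ${\bf c}'$; $\mathsf{E}$ is obtained from $\mathsf{G}$ via $f$ if $\mathsf{E}(X)=\int f(X,{\bf x})\,d\mathsf{G}({\bf x})$ (for $\mathsf{G}$ Gaussian with parameters $({\bf K},{\bf L},{\bf m})$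 this yields parameters $({\bf KA}',{\bf B}'+{\bf A}'^T{\bf LA}',{\bf c}'+{\bf A}'^T{\bf m})$). A collection of Gaussian observables is Gaussian compatible if there is a Gaussian observable $\mathsf{G}$ from which each member is obtained via some Gaussian postprocessing. A Gaussian channel $\Lambda$ is Gaussian incompatibility breaking if the set $\{\Lambda(\mathsf{E}):\mathsf{E}$ a Gaussian observable on $\mathcal H^{\otimes N'}\}$ is Gaussian compatible. *)

From HB Require Import structures.
From mathcomp Require Import all_boot all_order all_algebra.
From mathcomp Require Import complex.
From mathcomp Require Import reals.
Set Implicit Arguments. Unset Strict Implicit. Unset Printing Implicit Defensive.
Import Order.TTheory GRing.Theory Num.Theory.
Local Open Scope ring_scope.

Section GaussDefs.
Variable R : realType.

Definition rC (x : R) : R[i] := Complex x 0.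
Definition iC : R[i] := Complex 0 1.
Definition cmx m n (A : 'M[R]_(m, n)) : 'M[R[i]]_(m, n) := map_mx rC A.

(* complex positive semidefiniteness: v^* M v >= 0 for all complex v
   (in a numClosedField, 0 <= z means z is real and nonnegative) *)
Definition psdC n (M : 'M[R[i]]_n) : Prop :=
  forall v : 'cV[R[i]]_n,
    0 <= ((map_mx (fun z => z^*) v)^T *m M *m v) ord0 ord0.

(* the symplectic form Omega = (+)_{j=1}^n [[0,1],[-1,0]] on R^{2n}
   (coordinates ordered Q_1,P_1,...,Q_n,P_n) *)
Definition Omega (n : nat) : 'M[R]_(2 * n) :=
  \matrix_(i, j)
    (if ~~ odd i && (j == i.+1 :> nat) then 1
     else if odd i && (j.+1 == i :> nat) then -1 else 0).

(* Gaussian channel Lambda_(A,B,c) : L(H^{N'}) -> L(H^{N}) : admissibility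
   B + i Omega - i A^T Omega A >= 0 *)
Definition gaussian_channel (N N' : nat) (A : 'M[R]_(2 * N, 2 * N'))
    (B : 'M[R]_(2 * N')) (c : 'cV[R]_(2 * N')) : Prop :=
  psdC (cmx B + iC *: cmx (Omega N') - iC *: cmx (A^T *m Omega N *m A)).

(* parameters (K,L,m) of a Gaussian observable on H^{n} with outcome space
   R^M: L - i K^T Omega K >= 0 (every such triple determines a unique
   Gaussian observable) *)
Definition gaussian_obs (n M : nat) (K : 'M[R]_(2 * n, M)) (L : 'M[R]_M)
    (m : 'cV[R]_M) : Prop :=
  psdC (cmx L - iC *: cmx (K^T *m Omega n *m K)).

(* parameters of the image Lambda_(A,B,c)(E) of the Gaussian observable E
   with parameters (K,L,m) *)
Definition chan_K N N' M (A : 'M[R]_(2 * N, 2 * N')) (K : 'M[R]_(2 * N', M))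
  : 'M[R]_(2 * N, M) := A *m K.
Definition chan_L N' M (B : 'M[R]_(2 * N')) (K : 'M[R]_(2 * N', M))
    (L : 'M[R]_M) : 'M[R]_M := L + K^T *m B *m K.
Definition chan_m N' M (c : 'cV[R]_(2 * N')) (K : 'M[R]_(2 * N', M))
    (m : 'cV[R]_M) : 'cV[R]_M := m + K^T *m c.

(* E with parameters (K,L,m) (outcomes R^M') is obtained from G with
   parameters (K0,L0,m0) (outcomes R^M) via a Gaussian postprocessing
   (A',B',c'), A' real M x M', B' real positive semidefinite *)
Definition gauss_postprocessed n M M' (K0 : 'M[R]_(2 * n, M)) (L0 : 'M[R]_M)
    (m0 : 'cV[R]_M) (K : 'M[R]_(2 * n, M')) (L : 'M[R]_M') (m : 'cV[R]_M')
    : Prop :=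
  exists (A' : 'M[R]_(M, M')) (B' : 'M[R]_M') (c' : 'cV[R]_M'),
    psdC (cmx B') /\
    K = K0 *m A' /\ L = B' + A'^T *m L0 *m A' /\ m = c' + A'^T *m m0.

(* Lambda_(A,B,c) is Gaussian incompatibility breaking: the set of all
   Lambda(E), E a Gaussian observable on H^{N'} (any outcome dimension),
   is Gaussian compatible, i.e. there is one Gaussian observable G on H^{N}
   from which each of them is obtained by a Gaussian postprocessing. *)
Definition gauss_incompat_breaking (N N' : nat) (A : 'M[R]_(2 * N, 2 * N'))
    (B : 'M[R]_(2 * N')) (c : 'cV[R]_(2 * N')) : Prop :=
  exists (M0 : nat) (K0 : 'M[R]_(2 * N, M0)) (L0 : 'M[R]_M0) (m0 : 'cV[R]_M0),
    gaussian_obs K0 L0 m0 /\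
    forall (M : nat) (K : 'M[R]_(2 * N', M)) (L : 'M[R]_M) (m : 'cV[R]_M),
      gaussian_obs K L m ->
      gauss_postprocessed K0 L0 m0
        (chan_K A K) (chan_L B K L) (chan_m c K m).

End GaussDefs.

(* A Hermitian matrix P + iQ with P, Q real and Q skew-symmetric is positive
   semidefinite iff P is symmetric and xᵀPx + yᵀPy - 2 xᵀQy >= 0 for all real x, y.
   If B - iAᵀΩA >= 0, the triple (A, B, c) itself parametrises a Gaussian
   observable G, and the image of any Gaussian observable (K, L, m) is G
   postprocessed by (K, L, m); L >= 0 because it is the real part of
   L - iKᵀΩK >= 0.  Conversely, every x is the K-parameter of a one-outcome
   Gaussian observable (xᵀΩx = 0), so its image (Ax, xᵀBx) must come from the
   joint observable (K0, L0): Ax = K0 a and xᵀBx >= aᵀL0a.  Testing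
   L0 - iK0ᵀΩK0 >= 0 on the vectors a, a' obtained from x, y yields the
   inequality for B - iAᵀΩA, while the symmetry of B comes from the channel
   condition. *)

From HB Require Import structures.
From mathcomp Require Import all_boot all_order all_algebra.
From mathcomp Require Import complex.
From mathcomp Require Import reals.
From mathcomp Require Import ring lra.
Import Order.TTheory GRing.Theory Num.Theory.
Set Implicit Arguments. Unset Strict Implicit. Unset Printing Implicit Defensive.
Local Open Scope ring_scope.

Section HermitianForms.
Variable R : realType.

Definition bilin n (P : 'M[R]_n) (x y : 'cV[R]_n) : R := (x^T *m P *m y) ord0 ord0.

Definition cplx n (P Q : 'M[R]_n) : 'M[R[i]]_n :=
  \matrix_(i, j) Complex (P i j) (Q i j).

Definition ccol n (x y : 'cV[R]_n) : 'cV[R[i]]_n :=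
  \col_i Complex (x i ord0) (y i ord0).

Definition skew n (Q : 'M[R]_n) := Q^T = - Q.

Lemma bilinE n (P : 'M[R]_n) x y :
  bilin P x y = \sum_j \sum_i x i ord0 * P i j * y j ord0.
Proof.
rewrite /bilin mxE; apply: eq_bigr => j _; rewrite mxE mulr_suml.
by apply: eq_bigr => i _; rewrite mxE.
Qed.

Lemma bilin_tr n (P : 'M[R]_n) x y : bilin P^T x y = bilin P y x.
Proof.
have -> : bilin P y x = (y^T *m P *m x)^T ord0 ord0 by rewrite mxE.
by rewrite !trmx_mul trmxK mulmxA.
Qed.

Lemma bilin_conj n m (K : 'M[R]_(n, m)) (P : 'M[R]_n) x y :
  bilin (K^T *m P *m K) x y = bilin P (K *m x) (K *m y).
Proof. by rewrite /bilin trmx_mul !mulmxA. Qed.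

Lemma bilinN n (P : 'M[R]_n) x y : bilin (- P) x y = - bilin P x y.
Proof. by rewrite /bilin mulmxN mulNmx mxE. Qed.

Lemma bilin0 n (x y : 'cV[R]_n) : bilin 0 x y = 0.
Proof. by rewrite /bilin mulmx0 mul0mx mxE. Qed.

Lemma bilin0r n (P : 'M[R]_n) x : bilin P x 0 = 0.
Proof. by rewrite /bilin mulmx0 mxE. Qed.

Lemma bilin0l n (P : 'M[R]_n) y : bilin P 0 y = 0.
Proof. by rewrite -bilin_tr bilin0r. Qed.

Lemma Complex_sum (I : Type) (r : seq I) (f g : I -> R) :
  \sum_(i <- r) Complex (f i) (g i) = Complex (\sum_(i <- r) f i) (\sum_(i <- r) g i).
Proof. by elim: r => [|a r IH]; rewrite ?big_nil ?big_cons // IH. Qed.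

Lemma cplx_quadE n (P Q : 'M[R]_n) x y :
  ((map_mx (fun z => z^*) (ccol x y))^T *m cplx P Q *m ccol x y) ord0 ord0 =
  Complex (bilin P x x + bilin P y y - bilin Q x y + bilin Q y x)
          (bilin P x y - bilin P y x + bilin Q x x + bilin Q y y).
Proof.
rewrite mxE !bilinE -!sumrN -!big_split -Complex_sum; apply: eq_bigr => j _.
rewrite -!sumrN -!big_split -Complex_sum mxE mulr_suml; apply: eq_bigr => i _.
rewrite !mxE; apply/eqP; rewrite eq_complex /=; apply/andP; split; apply/eqP; ring.
Qed.

Lemma psdC_cplxE n (P Q : 'M[R]_n) :
  psdC (cplx P Q) <-> forall x y,
    0 <= bilin P x x + bilin P y y - bilin Q x y + bilin Q y x /\
    bilin P x y - bilin P y x + bilin Q x x + bilin Q y y = 0.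
Proof.
split=> [hPQ x y | hPQ v].
  by have := hPQ (ccol x y); rewrite cplx_quadE => /andP[/eqP -> ->].
pose re := map_mx (fun z : R[i] => complex.Re z) v.
pose im := map_mx (fun z : R[i] => complex.Im z) v.
have -> : v = ccol re im.
  by apply/matrixP => i j; rewrite !mxE !ord1; case: (v i ord0).
have [hre him] := hPQ re im.
(* on R[i], [0 <= Complex a b] unfolds to [(b == 0) && (0 <= a)] *)
by rewrite cplx_quadE /Num.le /= him eqxx hre.
Qed.

Lemma skew_bilinC n (Q : 'M[R]_n) x y : skew Q -> bilin Q y x = - bilin Q x y.
Proof. by move=> hQ; rewrite -bilin_tr hQ bilinN. Qed.

Lemma skew_bilin_diag n (Q : 'M[R]_n) x : skew Q -> bilin Q x x = 0.
Proof. by move=> /(skew_bilinC x x) hQ; lra. Qed.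

Lemma skew0 n : skew (0 : 'M[R]_n).
Proof. by rewrite /skew trmx0 oppr0. Qed.

Lemma skewN n (Q : 'M[R]_n) : skew Q -> skew (- Q).
Proof. by rewrite /skew linearN /= => ->. Qed.

Lemma skewB n (Q1 Q2 : 'M[R]_n) : skew Q1 -> skew Q2 -> skew (Q1 - Q2).
Proof. by rewrite /skew linearB /= => -> ->; rewrite opprD. Qed.

Lemma skew_conj n m (K : 'M[R]_(n, m)) (Q : 'M[R]_n) :
  skew Q -> skew (K^T *m Q *m K).
Proof. by rewrite /skew !trmx_mul trmxK => ->; rewrite mulNmx mulmxN mulmxA. Qed.

Lemma skew_mx11 (Q : 'M[R]_1) : skew Q -> Q = 0.
Proof.
move=> hQ; have hQQ : Q = - Q by rewrite -hQ [Q]mx11_scalar tr_scalar_mx.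
by apply/matrixP => i j; move/matrixP/(_ i j): hQQ; rewrite !mxE; lra.
Qed.

Lemma Omega_skew n : skew (Omega R n).
Proof.
apply/matrixP => i j; rewrite !mxE.
move: (nat_of_ord i) (nat_of_ord j) => a b.
have [->|_] := eqVneq b a.+1.
  rewrite !andbT (_ : (a == a.+2) = false); last by elim: a.
  rewrite (_ : (a.+2 == a) = false); last by elim: a.
  by rewrite !andbF /=; case: (odd a) => /=; rewrite ?oppr0 ?opprK.
have [->|_] := eqVneq a b.+1.
  by rewrite !andbT !andbF /=; case: (odd b) => /=; rewrite ?oppr0 ?opprK.
by rewrite !andbF /= oppr0.
Qed.

Lemma psdC_cplx_skewE n (P Q : 'M[R]_n) : skew Q ->
  psdC (cplx P Q) <->
  (forall x y, bilin P x y = bilin P y x) /\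
  (forall x y, 0 <= bilin P x x + bilin P y y - 2 * bilin Q x y).
Proof.
move=> hQ; rewrite psdC_cplxE.
have hC x y := skew_bilinC x y hQ; have hD x := skew_bilin_diag x hQ.
split=> [hPQ | [hP hPQ] x y].
  by split=> x y; have [h1 h2] := hPQ x y; rewrite !hD (hC x y) in h1 h2; lra.
by rewrite !hD (hC x y) hP; split; [have := hPQ x y; lra | lra].
Qed.

Lemma psdC_cplx_re n (P Q : 'M[R]_n) : skew Q -> psdC (cplx P Q) -> psdC (cplx P 0).
Proof.
move=> hQ /(psdC_cplx_skewE _ hQ) [hP hPQ].
apply/(psdC_cplx_skewE _ (@skew0 n)).
split=> // x y; rewrite bilin0 mulr0 subr0.
have := hPQ x 0; have := hPQ y 0; rewrite !bilin0l !bilin0r; lra.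
Qed.

Lemma psdC_mx11_ge0 (b : 'M[R]_1) : psdC (cplx b 0) -> 0 <= b ord0 ord0.
Proof.
move=> /psdC_cplxE /(_ (const_mx 1) 0) [+ _].
by rewrite !bilin0 !bilin0l bilinE !big_ord1 !mxE !mul1r !mulr1 !addr0 subr0.
Qed.

Lemma cmxE n (P : 'M[R]_n) : cmx P = cplx P 0.
Proof. by apply/matrixP => i j; rewrite !mxE. Qed.

Lemma cmx_subZE n (P Q : 'M[R]_n) : cmx P - iC R *: cmx Q = cplx P (- Q).
Proof.
apply/matrixP => i j; rewrite !mxE /=.
by apply/eqP; rewrite eq_complex /=; apply/andP; split; apply/eqP; ring.
Qed.

Lemma cmx_addZsubZE n (P Q1 Q2 : 'M[R]_n) :
  cmx P + iC R *: cmx Q1 - iC R *: cmx Q2 = cplx P (Q1 - Q2).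
Proof.
apply/matrixP => i j; rewrite !mxE /=.
by apply/eqP; rewrite eq_complex /=; apply/andP; split; apply/eqP; ring.
Qed.

End HermitianForms.

Section GaussianIncompatibilityBreaking.
Variable R : realType.

Lemma gaussian_obs_col n (x : 'cV[R]_(2 * n)) : gaussian_obs x 0 0.
Proof.
rewrite /gaussian_obs cmx_subZE (skew_mx11 (skew_conj x (Omega_skew R n))) oppr0.
apply/(psdC_cplx_skewE _ (@skew0 R 1)).
by split=> *; rewrite !bilin0 //; lra.
Qed.

Lemma incompat_breaking_dominated N N' (A : 'M[R]_(2 * N, 2 * N')) B c :
  gauss_incompat_breaking A B c ->
  exists M0 (K0 : 'M[R]_(2 * N, M0)) (L0 : 'M[R]_M0) (m0 : 'cV[R]_M0),
    gaussian_obs K0 L0 m0 /\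
    forall x, exists a, A *m x = K0 *m a /\ bilin L0 a a <= bilin B x x.
Proof.
case=> M0 [K0 [L0 [m0 [hG hpost]]]]; exists M0, K0, L0, m0; split=> // x.
have [a [b [c' [hb [hK [hL _]]]]]] := hpost 1%N x 0 0 (gaussian_obs_col x).
exists a; split=> //; rewrite cmxE in hb; have := psdC_mx11_ge0 hb.
have -> : bilin B x x = b ord0 ord0 + bilin L0 a a.
  by rewrite /bilin -[x^T *m B *m x]add0r -[_ + _]/(chan_L B x 0) hL mxE.
lra.
Qed.

Lemma incompat_breaking_psd N N' (A : 'M[R]_(2 * N, 2 * N')) B c :
  gaussian_channel A B c -> gauss_incompat_breaking A B c ->
  psdC (cmx B - iC R *: cmx (A^T *m Omega R N *m A)).
Proof.
rewrite /gaussian_channel cmx_addZsubZE => hch.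
have hS : skew (A^T *m Omega R N *m A) := skew_conj A (Omega_skew R N).
have [hB _] := (psdC_cplx_skewE B (skewB (Omega_skew R N') hS)).1 hch.
case/incompat_breaking_dominated => M0 [K0 [L0 [m0 []]]].
rewrite /gaussian_obs cmx_subZE.
move=> /(psdC_cplx_skewE _ (skewN (skew_conj K0 (Omega_skew R N)))) [_ hG] hdom.
rewrite cmx_subZE; apply/(psdC_cplx_skewE _ (skewN hS)); split=> // x y.
have [a [hxa hLa]] := hdom x; have [a' [hya hLa']] := hdom y.
by have := hG a a'; rewrite !bilinN !bilin_conj -hxa -hya; lra.
Qed.

Lemma psd_incompat_breaking N N' (A : 'M[R]_(2 * N, 2 * N')) B c :
  psdC (cmx B - iC R *: cmx (A^T *m Omega R N *m A)) ->
  gauss_incompat_breaking A B c.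
Proof.
move=> hG; exists (2 * N')%N, A, B, c; split=> // M K L m hE.
exists K, L, m; split=> //; rewrite /gaussian_obs cmx_subZE in hE.
by rewrite cmxE; apply: psdC_cplx_re hE; apply/skewN/skew_conj/Omega_skew.
Qed.

End GaussianIncompatibilityBreaking.

Theorem proposition2 (R : realType) (N N' : nat)
    (A : 'M[R]_(2 * N, 2 * N')) (B : 'M[R]_(2 * N')) (c : 'cV[R]_(2 * N')) :
  gaussian_channel A B c ->
  (gauss_incompat_breaking A B c <->
   psdC (cmx B - iC R *: cmx (A^T *m Omega R N *m A))).
Proof.
move=> hch; split; first exact: incompat_breaking_psd.
exact: psd_incompat_breaking.
Qed.
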